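(* Let $m\ge1$ and let $\phi$ be the automorphism of the free group $F_{2m}$ with basis $A_1,\dots,A_m,B_1,\dots,B_m$ defined by $\phi(A_i)=(A_1\cdots A_{i-1})A_i(A_1\cdots A_{i-1})^{-1}$ for $1\le i\le m$ and $\phi(B_j)=A_1A_2\cdots A_m(B_1B_2\cdots B_j)\overline{A}_{j-1}\overline{A}_{j-2}\cdots\overline{A}_1$ for $1\le j\le m$ (so $\phi(A_1)=A_1$ and $\phi(B_1)=A_1\cdots A_mB_1$). Then for all integers $n\ge1$ and $1\le k\le m$, $\phi^n(B_k)=A_1^n\cdots A_m^n\,u_{k,n}\,B_k\,\overline{A}_{k-1}^{\,n}\cdots\overline{A}_1^{\,n}$ in $F_{2m}$, where $u_{k,n}$ is a positive word.
   Context: A bar denotes the inverse of an element: $\overline{A}_i=A_i^{-1}$. A positive word is a word in the letters $A_1,\dots,A_m,B_1,\dots,B_m$ containing no inverse letters (the empty word is allowed). *)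

From mathcomp Require Import all_boot.
Set Implicit Arguments. Unset Strict Implicit. Unset Printing Implicit Defensive.

(* A generator: (false, i) = A_i, (true, j) = B_j  (indices 1..m). *)
Definition gen := (bool * nat)%type.
Definition genA (i : nat) : gen := (false, i).
Definition genB (j : nat) : gen := (true, j).

(* A letter: a generator together with an exponent flag
   (false = the generator itself, true = its inverse, written with a bar). *)
Definition letter := (gen * bool)%type.
Definition word := seq letter.

Definition letA (i : nat) : letter := (genA i, false).
Definition letAbar (i : nat) : letter := (genA i, true).
Definition letB (j : nat) : letter := (genB j, false).

Definition inv_letter (x : letter) : letter := (x.1, ~~ x.2).
Definition inv_word (w : word) : word := rev (map inv_letter w).

Definition push (x : letter) (w : word) : word :=
  match w with
  | y :: w' => if y == inv_letter x then w' else x :: w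
  | [::] => [:: x]
  end.
Definition reduce (w : word) : word := foldr push [::] w.

Definition feq (u v : word) : Prop := reduce u = reduce v.

Definition Aprefix (j : nat) : word := map letA (iota 1 j).
Definition Bprefix (j : nat) : word := map letB (iota 1 j).

Definition phi_gen (m : nat) (g : gen) : word :=
  match g with
  | (false, i) => Aprefix i.-1 ++ [:: letA i] ++ inv_word (Aprefix i.-1)
  | (true, j) => Aprefix m ++ Bprefix j ++ inv_word (Aprefix j.-1)
  end.

Definition phi_letter (m : nat) (x : letter) : word :=
  if x.2 then inv_word (phi_gen m x.1) else phi_gen m x.1.

Definition phi (m : nat) (w : word) : word := flatten (map (phi_letter m) w).

Definition positive_word (m : nat) (u : word) : bool :=
  all (fun x : letter => ~~ x.2 && (1 <= x.1.2 <= m)) u.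

Definition Apows (m n : nat) : word :=
  flatten (map (fun i => nseq n (letA i)) (iota 1 m)).
Definition Abarpows (k n : nat) : word :=
  flatten (map (fun i => nseq n (letAbar i)) (rev (iota 1 k.-1))).

(* Write P_j = A_1 ... A_j.  Since phi(A_1^n ... A_j^n) = A_1^(n+1) ... A_j^(n+1) P_j^-1,
   induction on n reduces the theorem to showing that P_m^-1 phi(u) P_m is again
   positive for the words u that occur.  This fails for arbitrary positive u, as
   P_m^-1 phi(A_i) P_m = (A_(i+1) ... A_m)^-1 A_i (A_(i+1) ... A_m), but it holds for
   the words accepted by the following automaton: in state p the letter A_i is allowed
   when p <= i and leads to state i, and B_j is always allowed and leads to state j - 1.
   Reading such a word with P_p^-1 P_m = A_(p+1) ... A_m carried in front, each letter
   is absorbed into a positive word, and the output is again accepted. *)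

From mathcomp Require Import all_boot.
From Stdlib Require Import Setoid Morphisms.

Lemma inv_letterK : involutive inv_letter.
Proof. by case=> g b; rewrite /inv_letter /= negbK. Qed.

Fixpoint reduced (w : word) : bool :=
  if w is x :: ((y :: _) as w') then (y != inv_letter x) && reduced w' else true.

Lemma reduced_behead x w : reduced (x :: w) -> reduced w.
Proof. by case: w => [|y w] //= /andP[]. Qed.

Lemma reduced_push x w : reduced w -> reduced (push x w).
Proof.
case: w => [|y w] //= w_red.
by case: eqP => [_|/eqP yx]; [exact: reduced_behead w_red | rewrite /= yx].
Qed.

Lemma reduced_foldr_push t w : reduced t -> reduced (foldr push t w).
Proof. by move=> t_red; elim: w => //= x w IHw; apply: reduced_push. Qed.

Lemma push_invK x s : reduced s -> push x (push (inv_letter x) s) = s.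
Proof.
case: s => [|z s] /=; first by rewrite eqxx.
rewrite inv_letterK; case: eqP => [-> | _] s_red; last by rewrite /= eqxx.
by case: s s_red => [|y s] //= /andP[/negbTE ->].
Qed.

Lemma foldr_push_push t x w : reduced t ->
  foldr push t (push x w) = push x (foldr push t w).
Proof.
move=> t_red; case: w => [|y w] //=.
by case: eqP => [-> | _] //=; rewrite push_invK // reduced_foldr_push.
Qed.

Lemma foldr_push_reduce t u : reduced t -> foldr push t (reduce u) = foldr push t u.
Proof.
by move=> t_red; elim: u => //= x u IHu; rewrite foldr_push_push // IHu.
Qed.

Lemma reduce_cat u v : reduce (u ++ v) = foldr push (reduce v) u.
Proof. exact: foldr_cat. Qed.

#[global] Instance feq_equiv : Equivalence feq.
Proof. by split; rewrite /feq; congruence. Qed.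

#[global] Instance cat_proper : Proper (feq ==> feq ==> feq) (@cat letter).
Proof.
move=> u u' eq_u v v' eq_v; rewrite /feq !reduce_cat eq_v.
have v'_red : reduced (reduce v') := reduced_foldr_push [::] v' isT.
by rewrite -(foldr_push_reduce _ u) // eq_u foldr_push_reduce.
Qed.

Lemma feq_cancel x w : feq (x :: inv_letter x :: w) w.
Proof. by rewrite /feq /= push_invK // reduced_foldr_push. Qed.

Lemma inv_word_cat u v : inv_word (u ++ v) = inv_word v ++ inv_word u.
Proof. by rewrite /inv_word map_cat rev_cat. Qed.

Lemma inv_word_cons x w : inv_word (x :: w) = inv_word w ++ [:: inv_letter x].
Proof. by rewrite /inv_word /= rev_cons cats1. Qed.

Lemma inv_wordK : involutive inv_word.
Proof.
move=> w; rewrite /inv_word map_rev revK -map_comp.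
by rewrite map_id_in // => x _ /=; rewrite inv_letterK.
Qed.

Lemma cat_inv_word w : feq (w ++ inv_word w) [::].
Proof.
elim: w => [|x w IHw] //=.
rewrite inv_word_cons catA -cat_cons -cat1s -catA IHw.
exact: feq_cancel x [::].
Qed.

Lemma inv_word_cat_l w : feq (inv_word w ++ w) [::].
Proof. by have := cat_inv_word (inv_word w); rewrite inv_wordK. Qed.

Lemma catK u v : feq (inv_word u ++ u ++ v) v.
Proof. by rewrite catA inv_word_cat_l. Qed.

Lemma catKV u v : feq (u ++ inv_word u ++ v) v.
Proof. by rewrite catA cat_inv_word. Qed.

#[global] Instance inv_word_proper : Proper (feq ==> feq) inv_word.
Proof. by move=> u v eq_uv; rewrite -[inv_word u]cats0 -(cat_inv_word v) -{1}eq_uv catK. Qed.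

Lemma Aprefix_cat a b : Aprefix (a + b) = Aprefix a ++ map letA (iota a.+1 b).
Proof. by rewrite /Aprefix iotaD map_cat add1n. Qed.

Lemma AprefixS j : Aprefix j.+1 = Aprefix j ++ [:: letA j.+1].
Proof. by rewrite -[j.+1]addn1 Aprefix_cat addn1. Qed.

Lemma BprefixS j : Bprefix j.+1 = Bprefix j ++ [:: letB j.+1].
Proof. by rewrite /Bprefix -[j.+1]addn1 iotaD map_cat add1n addn1. Qed.

Lemma Apows0 j : Apows j 0 = [::].
Proof. by rewrite /Apows; elim: (iota 1 j) => //= i s ->. Qed.

Lemma ApowsS j n : Apows j.+1 n = Apows j n ++ nseq n (letA j.+1).
Proof. by rewrite /Apows -[j.+1]addn1 iotaD map_cat flatten_cat /= cats0 add1n addn1. Qed.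

Lemma Abarpows_inv k n : Abarpows k n = inv_word (Apows k.-1 n).
Proof.
rewrite /Abarpows /Apows; elim: (iota 1 k.-1) => [|i s IHs] //=.
rewrite inv_word_cat -IHs rev_cons map_rcons flatten_rcons.
by rewrite /inv_word map_nseq rev_nseq.
Qed.

Lemma Aprefix_split {p i} : p <= i -> Aprefix i = Aprefix p ++ map letA (iota p.+1 (i - p)).
Proof. by move=> le_pi; rewrite -Aprefix_cat subnKC. Qed.

Section Phi.

Variable m : nat.

Lemma phi_cat u v : phi m (u ++ v) = phi m u ++ phi m v.
Proof. by rewrite /phi map_cat flatten_cat. Qed.

Lemma phi_cons x w : phi m (x :: w) = phi_letter m x ++ phi m w.
Proof. by []. Qed.

Lemma phi_letter_inv x : phi_letter m (inv_letter x) = inv_word (phi_letter m x).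
Proof. by case: x => g []; rewrite /phi_letter //= inv_wordK. Qed.

Lemma phi_inv w : phi m (inv_word w) = inv_word (phi m w).
Proof.
elim: w => [|x w IHw] //.
by rewrite inv_word_cons phi_cat IHw /= inv_word_cat /phi /= cats0 phi_letter_inv.
Qed.

Lemma phi_push x w : feq (phi m (push x w)) (phi m (x :: w)).
Proof.
case: w => [|y w] //=; case: eqP => [-> | _] //=.
by rewrite !phi_cons phi_letter_inv catKV.
Qed.

Lemma phi_reduce w : feq (phi m (reduce w)) (phi m w).
Proof. by elim: w => [|x w IHw] //=; rewrite phi_push !phi_cons IHw. Qed.

#[global] Instance phi_proper : Proper (feq ==> feq) (phi m).
Proof. by move=> u v eq_uv; rewrite -phi_reduce eq_uv phi_reduce. Qed.

Lemma phiA i : phi m [:: letA i] = Aprefix i.-1 ++ [:: letA i] ++ inv_word (Aprefix i.-1).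
Proof. by rewrite /phi /= cats0. Qed.

Lemma phiB j : phi m [:: letB j] = Aprefix m ++ Bprefix j ++ inv_word (Aprefix j.-1).
Proof. by rewrite /phi /= cats0. Qed.

Lemma phi_nseqA n i : feq (phi m (nseq n (letA i)))
  (Aprefix i.-1 ++ nseq n (letA i) ++ inv_word (Aprefix i.-1)).
Proof.
elim: n => [|n IHn] /=; first by rewrite cat_inv_word.
by rewrite -cat1s phi_cat phiA IHn -!catA catK.
Qed.

Lemma phi_Apows j n : feq (phi m (Apows j n)) (Apows j n.+1 ++ inv_word (Aprefix j)).
Proof.
elim: j => [|j IHj] //.
rewrite ApowsS [Apows j.+1 _]ApowsS phi_cat IHj phi_nseqA AprefixS inv_word_cat.
by rewrite -[n.+1]addn1 nseqD -!catA catK catKV.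
Qed.

Definition twist p q w := inv_word (Aprefix p) ++ phi m w ++ Aprefix q.

Lemma twist_cat p q r u v : feq (twist p q (u ++ v)) (twist p r u ++ twist r q v).
Proof. by rewrite /twist phi_cat -!catA catKV. Qed.

Lemma twist_nil p i : p <= i -> feq (twist p i [::]) (map letA (iota p.+1 (i - p))).
Proof. by move=> le_pi; rewrite /twist (Aprefix_split le_pi) catK. Qed.

Lemma twistA p i : 0 < i -> p <= i ->
  feq (twist p i [:: letA i]) (map letA (iota p.+1 (i - p)) ++ [:: letA i]).
Proof.
case: i => // i _ le_pi; rewrite /twist phiA succnK AprefixS -!catA catK.
by rewrite [Aprefix i ++ _]catA -AprefixS (Aprefix_split le_pi) -catA catK.
Qed.

Lemma twistB p j : p <= m ->
  feq (twist p j [:: letB j.+1]) (map letA (iota p.+1 (m - p)) ++ Bprefix j.+1).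
Proof.
by move=> le_pm; rewrite /twist phiB (Aprefix_split le_pm) -!catA catK inv_word_cat_l cats0.
Qed.

End Phi.

Section Admissible.

Variable m : nat.

Fixpoint admissible (p : nat) (w : word) : bool :=
  if w is (g, inv) :: w' then
    [&& ~~ inv, 0 < g.2 <= m &
      if g.1 then admissible g.2.-1 w' else (p <= g.2) && admissible g.2 w']
  else true.

Lemma admissible_positive p w : admissible p w -> positive_word m w.
Proof.
elim: w p => [|[[b i] inv] w IHw] p //= /and3P[-> -> adm_w] /=.
by case: b adm_w => [|/andP[_]]; apply: IHw.
Qed.

Lemma admissible_Arun p n w : p + n <= m -> admissible (p + n) w ->
  admissible p (map letA (iota p.+1 n) ++ w).
Proof.
elim: n p => [|n IHn] p /=; first by rewrite addn0.
rewrite -addSnnS => le_m adm_w.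
by rewrite leqnSn IHn // (leq_trans (leq_addr n p.+1) le_m).
Qed.

Lemma admissible_Bword s v p : all (fun j => 0 < j <= m) s ->
  (forall q, admissible q v) -> admissible p (map letB s ++ v).
Proof. by elim: s p => [|j s IHs] p //= /andP[-> s_m] adm_v; rewrite IHs. Qed.

Lemma admissible_Bprefix j p w : j <= m -> (forall q, admissible q w) ->
  admissible p (Bprefix j ++ w).
Proof.
move=> le_jm adm_w; apply: admissible_Bword adm_w; apply/allP => i.
by rewrite mem_iota add1n ltnS => /andP[-> /leq_trans->].
Qed.

Lemma admissible_cat p w v : (forall q, admissible q v) -> admissible p w ->
  admissible p (w ++ v).
Proof.
move=> adm_v; elim: w p => [|[[b i] inv] w IHw] p //= /and3P[-> -> adm_w] /=.
by case: b adm_w => [/IHw | /andP[-> /IHw]].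
Qed.

Lemma twist_admissible p w : p <= m -> admissible p w ->
  exists2 w', admissible p w' & feq (twist m p m w) w'.
Proof.
elim: w p => [|[[b [|i]] [|]] w IHw] p le_pm //=.
  exists (map letA (iota p.+1 (m - p))); last exact: twist_nil.
  by rewrite -[map _ _]cats0 admissible_Arun ?subnKC.
case/andP=> lt_im; rewrite -cat1s.
case: b => [adm_w | /andP[le_pi adm_w]].
  have [w' adm_w' eq_w'] := IHw i (ltnW lt_im) adm_w.
  exists (map letA (iota p.+1 (m - p)) ++ Bprefix i.+1 ++ w').
    rewrite admissible_Arun ?subnKC // BprefixS -catA admissible_Bprefix ?(ltnW lt_im) //.
    by move=> q /=; rewrite lt_im adm_w'.
  by rewrite (twist_cat _ _ _ i) twistB // eq_w' -catA.
have [w' adm_w' eq_w'] := IHw i.+1 lt_im adm_w.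
exists (map letA (iota p.+1 (i.+1 - p)) ++ letA i.+1 :: w').
  by rewrite admissible_Arun ?subnKC //= lt_im leqnn.
by rewrite (twist_cat _ _ _ i.+1) twistA // eq_w' -catA.
Qed.

End Admissible.

Lemma iter_phi_B m k n : 0 < k <= m ->
  exists2 u, admissible m m u &
    feq (iter n (phi m) [:: letB k]) (Apows m n ++ u ++ [:: letB k] ++ Abarpows k n).
Proof.
case: k => // k /= lt_km; elim: n => [|n [u adm_u eq_u]].
  by exists [::]; rewrite // Abarpows_inv !Apows0.
have [u' adm_u' eq_u'] := twist_admissible _ _ _ (leqnn m) adm_u.
exists (u' ++ Bprefix k).
  by apply: admissible_cat adm_u' => q; rewrite -[Bprefix k]cats0 admissible_Bprefix ?(ltnW lt_km).
rewrite iterS eq_u -cat1s !phi_cat !Abarpows_inv phi_inv !phi_Apows inv_word_cat inv_wordK.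
rewrite phiB BprefixS -!catA catK.
by rewrite -eq_u' /twist -!catA.
Qed.

Theorem lemma7p7 (m : nat) (hm : 1 <= m) (n k : nat) (hn : 1 <= n)
    (hk1 : 1 <= k) (hkm : k <= m) :
  exists u : word, positive_word m u /\
    feq (iter n (phi m) [:: letB k])
        (Apows m n ++ u ++ [:: letB k] ++ Abarpows k n).
Proof.
have [|u adm_u eq_u] := iter_phi_B m k n; first by rewrite hk1 hkm.
by exists u; split; first exact: admissible_positive adm_u.
Qed.
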